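(* Let $(\mathcal P_1,\cdot_1,[-,-]_1)$ and $(\mathcal P_2,\cdot_2,[-,-]_2)$ be Poisson algebras, and let $\mathcal P=\mathcal P_1\otimes\mathcal P_2$ be the Poisson algebra with componentwise product $\cdot$ and Lie bracket $$[x_1\otimes y_1,x_2\otimes y_2]_\otimes=[x_1,x_2]_1\otimes(y_1\cdot_2y_2)+(x_1\cdot_1x_2)\otimes[y_1,y_2]_2 .$$ Endow $\mathcal P$ with the $n$-ary bracket $$[x_1,x_2,\dots,x_n]:=[x_1,[x_2,\dots,[x_{n-1},x_n]_\otimes\dots]_\otimes]_\otimes,\qquad x_i\in\mathcal P.$$ Let $\mathcal I$ be the ideal of the Poisson algebra $(\mathcal P,\cdot,[-,-]_\otimes)$ generated by all elements $$[x_1,\dots,x_i,\dots,x_j,\dots,x_n]+[x_1,\dots,x_j,\dots,x_i,\dots,x_n],\qquad 1\le i<j\le n,\ x_k\in\mathcal P.$$ Then the quotient $\mathcal P/\mathcal I$, with the induced product and the induced $n$-ary bracket $[\bar x_1,\dots,\bar x_n]=[x_1,\dots,x_n]+\mathcal I$, is a Poisson $n$-Lie algebra.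
   Context: A Poisson algebra is a commutative associative algebra $(\mathcal P,\cdot)$ with a Lie bracket $[-,-]$ satisfying $[x,y\cdot z]=[x,y]\cdot z+y\cdot[x,z]$. An ideal of a Poisson algebra is a subspace closed under multiplication by arbitrary elements with respect to both $\cdot$ and $[-,-]$. A Poisson $n$-Lie algebra is a commutative associative algebra with an $n$-linear skew-symmetric bracket satisfying the fundamental identity $[x_1,\dots,x_{n-1},[y_1,\dots,y_n]]=\sum_{i=1}^n[y_1,\dots,[x_1,\dots,x_{n-1},y_i],\dots,y_n]$ and the Leibniz rule $[y\cdot z,x_2,\dots,x_n]=y\cdot[z,x_2,\dots,x_n]+z\cdot[y,x_2,\dots,x_n]$. *)

From mathcomp Require Import all_boot all_algebra.
Set Implicit Arguments. Unset Strict Implicit. Unset Printing Implicit Defensive.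
Import GRing.Theory.
Local Open Scope ring_scope.

(* All algebras are over a field K; an "algebra" is given as a K-vector space
   (lmodType K) together with explicit bilinear operations (no unit assumed). *)

Section Defs.
Variable K : fieldType.

Definition lin (U V : lmodType K) (g : U -> V) : Prop :=
  forall (a : K) (u v : U), g (a *: u + v) = a *: g u + g v.

Definition bilin (U V W : lmodType K) (f : U -> V -> W) : Prop :=
  (forall (a : K) (u u' : U) (v : V), f (a *: u + u') v = a *: f u v + f u' v) /\
  (forall (a : K) (u : U) (v v' : V), f u (a *: v + v') = a *: f u v + f u v').

Definition comm_assoc_alg (A : lmodType K) (mul : A -> A -> A) : Prop :=
  bilin mul /\ (forall x y, mul x y = mul y x) /\
  (forall x y z, mul x (mul y z) = mul (mul x y) z).

Definition lie_bracket (A : lmodType K) (br : A -> A -> A) : Prop :=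
  bilin br /\ (forall x, br x x = 0) /\
  (forall x y z, br x (br y z) + br y (br z x) + br z (br x y) = 0).

Definition poisson (A : lmodType K) (mul br : A -> A -> A) : Prop :=
  comm_assoc_alg mul /\ lie_bracket br /\
  (forall x y z, br x (mul y z) = mul (br x y) z + mul y (br x z)).

(* t : P1 -> P2 -> P exhibits P as the tensor product P1 (x)_K P2:
   t is bilinear, the pure tensors span P, and every bilinear map factors
   through t via a linear map (uniqueness follows from spanning). *)
Definition is_tensor_product (P1 P2 P : lmodType K) (t : P1 -> P2 -> P) : Prop :=
  bilin t /\
  (forall p : P, exists (k : nat) (a : 'I_k -> P1) (b : 'I_k -> P2),
      p = \sum_(i < k) t (a i) (b i)) /\
  (forall (W : lmodType K) (f : P1 -> P2 -> W), bilin f ->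
      exists g : P -> W, lin g /\ forall x y, g (t x y) = f x y).

Definition poisson_ideal (A : lmodType K) (mul br : A -> A -> A) (J : A -> Prop) : Prop :=
  J 0 /\ (forall x y, J x -> J y -> J (x + y)) /\ (forall (a : K) x, J x -> J (a *: x)) /\
  (forall x y, J x -> J (mul y x) /\ J (mul x y) /\ J (br y x) /\ J (br x y)).

Definition gen_poisson_ideal (A : lmodType K) (mul br : A -> A -> A) (S : A -> Prop)
  (x : A) : Prop :=
  forall J : A -> Prop, poisson_ideal mul br J -> (forall y, S y -> J y) -> J x.

Fixpoint nest (A : lmodType K) (br : A -> A -> A) (s : seq A) : A :=
  match s with
  | [::] => 0
  | [:: x] => x
  | x :: s' => br x (nest br s')
  end.

Definition nbr (A : lmodType K) (br : A -> A -> A) (n : nat) (x : 'I_n -> A) : A :=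
  nest br (map x (enum 'I_n)).

Definition upd (A : Type) (n : nat) (x : 'I_n -> A) (k : 'I_n) (v : A) : 'I_n -> A :=
  fun m => if m == k then v else x m.
Definition swapf (A : Type) (n : nat) (x : 'I_n -> A) (i j : 'I_n) : 'I_n -> A :=
  fun m => if m == i then x j else if m == j then x i else x m.
Definition firstset (A : Type) (n : nat) (x : 'I_n -> A) (v : A) : 'I_n -> A :=
  fun m => if val m == 0%N then v else x m.
Definition lastset (A : Type) (n : nat) (x : 'I_n -> A) (v : A) : 'I_n -> A :=
  fun m => if val m == n.-1 then v else x m.

Definition skew_gens (A : lmodType K) (br : A -> A -> A) (n : nat) (p : A) : Prop :=
  exists (x : 'I_n -> A) (i j : 'I_n), (i < j)%N /\ p = nbr br x + nbr br (swapf x i j).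

Definition poisson_nlie (A : lmodType K) (n : nat) (mul : A -> A -> A)
  (B : ('I_n -> A) -> A) : Prop :=
  comm_assoc_alg mul /\
  (forall (x : 'I_n -> A) (k : 'I_n) (a : K) (u v : A),
      B (upd x k (a *: u + v)) = a *: B (upd x k u) + B (upd x k v)) /\
  (forall (x : 'I_n -> A) (i j : 'I_n), i != j -> B (swapf x i j) = - B x) /\
  (forall x y : 'I_n -> A,
      B (lastset x (B y)) = \sum_(i < n) B (upd y i (B (lastset x (y i))))) /\
  (forall (x : 'I_n -> A) (y z : A),
      B (firstset x (mul y z)) = mul y (B (firstset x z)) + mul z (B (firstset x y))).

End Defs.

From mathcomp Require Import all_boot all_algebra.
Set Implicit Arguments. Unset Strict Implicit. Unset Printing Implicit Defensive.
Import GRing.Theory.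
Local Open Scope ring_scope.

(* P1 (x) P2 is again a Poisson algebra: every identity involved is multilinear,
   so it suffices to check it on pure tensors.  In any Poisson algebra the nested
   bracket [x1, [x2, ..., [x_{n-1}, x_n]]] is multilinear, satisfies the Leibniz
   rule in x1, and [v, -] acts on it as a derivation by the Jacobi identity.
   Modulo I it is also skew-symmetric, so exchanging x1 and x_n shows that
   [x1, ..., x_{n-1}, -] agrees modulo I with [v, -] for v = [x2, ..., x_{n-1}, x1];
   the derivation property of [v, -] is then exactly the fundamental identity. *)

Section PoissonAlgebras.
Variable K : fieldType.

Section Linear.
Variables (U V : lmodType K) (g : U -> V).
Hypothesis g_lin : lin g.

Lemma lin0 : g 0 = 0.
Proof. by have := g_lin (-1) 0 0; rewrite scaler0 addr0 scaleN1r addNr. Qed.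

Lemma linD : {morph g : u v / u + v}.
Proof. by move=> u v; have := g_lin 1 u v; rewrite !scale1r. Qed.

Lemma linZ a : {morph g : u / a *: u}.
Proof. by move=> u; have := g_lin a u 0; rewrite !addr0 lin0 addr0. Qed.

Lemma linN : {morph g : u / - u}.
Proof. by move=> u; rewrite -scaleN1r linZ scaleN1r. Qed.

Lemma linB : {morph g : u v / u - v}.
Proof. by move=> u v; rewrite linD linN. Qed.

Lemma lin_sum (I : Type) (r : seq I) (P : pred I) (F : I -> U) :
  g (\sum_(i <- r | P i) F i) = \sum_(i <- r | P i) g (F i).
Proof. exact: (big_morph g linD lin0). Qed.

End Linear.

Section Bilinear.
Variables (U V W : lmodType K) (f : U -> V -> W).
Hypothesis f_bilin : bilin f.

Lemma bilin_linl v : lin (fun u => f u v).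
Proof. by move=> a u u'; apply: f_bilin.1. Qed.

Lemma bilin_linr u : lin (f u).
Proof. by move=> a v v'; apply: f_bilin.2. Qed.

Lemma bilin0l v : f 0 v = 0. Proof. exact (lin0 (bilin_linl v)). Qed.
Lemma bilin0r u : f u 0 = 0. Proof. exact (lin0 (bilin_linr u)). Qed.
Lemma bilinDl u u' v : f (u + u') v = f u v + f u' v.
Proof. exact (linD (bilin_linl v) u u'). Qed.
Lemma bilinDr u v v' : f u (v + v') = f u v + f u v'.
Proof. exact (linD (bilin_linr u) v v'). Qed.
Lemma bilinZl a u v : f (a *: u) v = a *: f u v.
Proof. exact (linZ (bilin_linl v) a u). Qed.
Lemma bilinZr a u v : f u (a *: v) = a *: f u v.
Proof. exact (linZ (bilin_linr u) a v). Qed.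
Lemma bilinNl u v : f (- u) v = - f u v. Proof. exact (linN (bilin_linl v) u). Qed.
Lemma bilinNr u v : f u (- v) = - f u v. Proof. exact (linN (bilin_linr u) v). Qed.
Lemma bilinBl u u' v : f (u - u') v = f u v - f u' v.
Proof. exact (linB (bilin_linl v) u u'). Qed.
Lemma bilinBr u v v' : f u (v - v') = f u v - f u v'.
Proof. exact (linB (bilin_linr u) v v'). Qed.
Lemma bilin_sumr (I : Type) (r : seq I) (P : pred I) (F : I -> V) u :
  f u (\sum_(i <- r | P i) F i) = \sum_(i <- r | P i) f u (F i).
Proof. exact (lin_sum (bilin_linr u) r P F). Qed.

End Bilinear.

Section Alternating.
Variables (A : lmodType K) (b : A -> A -> A).
Hypotheses (b_bilin : bilin b) (bxx : forall x, b x x = 0).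

Lemma alternating_anti x y : b x y = - b y x.
Proof.
have := bxx (x + y); rewrite (bilinDl b_bilin) !(bilinDr b_bilin) !bxx add0r addr0.
by move/eqP; rewrite addr_eq0 => /eqP.
Qed.

Lemma lie_bracketI :
  (forall x y z, b x (b y z) = b (b x y) z + b y (b x z)) -> lie_bracket b.
Proof.
move=> jacobi; split; [exact: b_bilin | split; [exact: bxx | move=> x y z]].
rewrite jacobi (alternating_anti z (b x y)) (alternating_anti z x) (bilinNr b_bilin).
by rewrite addrK subrr.
Qed.

End Alternating.

Section PoissonAlgebra.
Variables (A : lmodType K) (m b : A -> A -> A).
Hypothesis hA : poisson m b.

Lemma poisson_mul_bilin : bilin m. Proof. by case: hA => [[]]. Qed.
Lemma poisson_mulC x y : m x y = m y x. Proof. by case: hA => [[_ []]]. Qed.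
Lemma poisson_mulA x y z : m x (m y z) = m (m x y) z.
Proof. by case: hA => [[_ []]]. Qed.
Lemma poisson_mulCA x y z : m x (m y z) = m y (m x z).
Proof. by rewrite !poisson_mulA (poisson_mulC x). Qed.
Lemma poisson_br_bilin : bilin b. Proof. by case: hA => _ [[]]. Qed.
Lemma poisson_leibniz x y z : b x (m y z) = m (b x y) z + m y (b x z).
Proof. by case: hA => _ []. Qed.

Lemma poisson_brxx x : b x x = 0. Proof. by case: hA => _ [[_ []]]. Qed.

Lemma poisson_br_anti x y : b x y = - b y x.
Proof. exact: alternating_anti poisson_br_bilin poisson_brxx x y. Qed.

Lemma poisson_jacobi x y z : b x (b y z) = b (b x y) z + b y (b x z).
Proof.
have [_ [[_ [_ cyclic]]] _] := hA; apply/eqP; rewrite -subr_eq0 -[0](cyclic x y z).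
rewrite (poisson_br_anti (b x y)) (poisson_br_anti x z) (bilinNr poisson_br_bilin).
by rewrite opprD !opprK addrA addrAC.
Qed.

Lemma poisson_leibnizl x y z : b (m x y) z = m x (b y z) + m y (b x z).
Proof.
rewrite poisson_br_anti poisson_leibniz opprD.
rewrite -(bilinNl poisson_mul_bilin) -(bilinNr poisson_mul_bilin) -!poisson_br_anti.
by rewrite addrC (poisson_mulC (b x z)).
Qed.

End PoissonAlgebra.

Section TensorProduct.
Variables (P1 : lmodType K) (mul1 br1 : P1 -> P1 -> P1).
Hypothesis hP1 : poisson mul1 br1.
Variables (P2 : lmodType K) (mul2 br2 : P2 -> P2 -> P2).
Hypothesis hP2 : poisson mul2 br2.
Variables (P : lmodType K) (t : P1 -> P2 -> P).
Hypothesis ht : is_tensor_product t.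
Variables (mul br : P -> P -> P).
Hypotheses (hmul : bilin mul) (hbr : bilin br).
Hypothesis mulE : forall a b c d, mul (t a b) (t c d) = t (mul1 a c) (mul2 b d).
Hypothesis brE : forall a b c d,
  br (t a b) (t c d) = t (br1 a c) (mul2 b d) + t (mul1 a c) (br2 b d).

Let t_bilin : bilin t. Proof. by case: ht. Qed.

Lemma tensor_ind (Pr : P -> Prop) :
  (forall u v, Pr u -> Pr v -> Pr (u + v)) -> (forall a b, Pr (t a b)) ->
  forall p, Pr p.
Proof.
move=> PrD Prt p; have [_ [span _]] := ht; have [k [a [b ->]]] := span p.
by apply: big_ind => //; rewrite -(bilin0l t_bilin 0).
Qed.

Lemma tensor_mulC x y : mul x y = mul y x.
Proof.
elim/tensor_ind: x y => [u v IHu IHv|a b] y.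
  by rewrite (bilinDl hmul) (bilinDr hmul) IHu IHv.
elim/tensor_ind: y => [u v IHu IHv|c d].
  by rewrite (bilinDl hmul) (bilinDr hmul) IHu IHv.
by rewrite !mulE (poisson_mulC hP1) (poisson_mulC hP2).
Qed.

Lemma tensor_mulA x y z : mul x (mul y z) = mul (mul x y) z.
Proof.
elim/tensor_ind: x y z => [u v IHu IHv|a b] y z.
  by rewrite !(bilinDl hmul) IHu IHv.
elim/tensor_ind: y z => [u v IHu IHv|c d] z.
  by rewrite !(bilinDl hmul, bilinDr hmul) IHu IHv.
elim/tensor_ind: z => [u v IHu IHv|e f].
  by rewrite !(bilinDr hmul) IHu IHv.
by rewrite !mulE (poisson_mulA hP1) (poisson_mulA hP2).
Qed.

Lemma tensor_br_anti x y : br x y = - br y x.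
Proof.
elim/tensor_ind: x y => [u v IHu IHv|a b] y.
  by rewrite (bilinDl hbr) (bilinDr hbr) IHu IHv opprD.
elim/tensor_ind: y => [u v IHu IHv|c d].
  by rewrite (bilinDl hbr) (bilinDr hbr) IHu IHv opprD.
rewrite !brE (poisson_br_anti hP1 c) (poisson_br_anti hP2 d).
rewrite (bilinNl t_bilin) (bilinNr t_bilin) opprD !opprK.
by rewrite (poisson_mulC hP1 c) (poisson_mulC hP2 d) addrC.
Qed.

Lemma tensor_brxx x : br x x = 0.
Proof.
elim/tensor_ind: x => [u v IHu IHv|a b].
  rewrite (bilinDl hbr) !(bilinDr hbr) IHu IHv add0r addr0.
  by rewrite tensor_br_anti addNr.
rewrite brE (poisson_brxx hP1) (poisson_brxx hP2).
by rewrite (bilin0l t_bilin) (bilin0r t_bilin) addr0.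
Qed.

Lemma tensor_leibniz x y z : br x (mul y z) = mul (br x y) z + mul y (br x z).
Proof.
elim/tensor_ind: x y z => [u v IHu IHv|a b] y z.
  by rewrite !(bilinDl hbr, bilinDl hmul, bilinDr hmul) IHu IHv addrACA.
elim/tensor_ind: y z => [u v IHu IHv|c d] z.
  by rewrite !(bilinDl hmul, bilinDr hbr) IHu IHv addrACA.
elim/tensor_ind: z => [u v IHu IHv|e f].
  by rewrite !(bilinDr hmul, bilinDr hbr) IHu IHv addrACA.
rewrite mulE !brE (bilinDl hmul) (bilinDr hmul) !mulE.
rewrite (poisson_leibniz hP1) (poisson_leibniz hP2) (bilinDl t_bilin) (bilinDr t_bilin).
rewrite -!(poisson_mulA hP1) -!(poisson_mulA hP2).
by rewrite (poisson_mulCA hP1 c) (poisson_mulCA hP2 d) addrACA.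
Qed.

Lemma tensor_jacobi_pure a a' b b' c c' (x := t a a') (y := t b b') (z := t c c') :
  br x (br y z) = br (br x y) z + br y (br x z).
Proof.
rewrite /x /y /z !brE !(bilinDl hbr, bilinDr hbr) !brE.
rewrite !(poisson_leibniz hP1, poisson_leibniz hP2).
rewrite !(poisson_leibnizl hP1, poisson_leibnizl hP2).
rewrite !(bilinDl t_bilin, bilinDr t_bilin).
rewrite (poisson_jacobi hP1 a) (poisson_jacobi hP2 a') (bilinDl t_bilin) (bilinDr t_bilin).
rewrite (poisson_br_anti hP1 b a) (poisson_br_anti hP2 b' a').
rewrite (bilinNl (poisson_mul_bilin hP1)) (bilinNl (poisson_mul_bilin hP2)).
rewrite (bilinNl t_bilin) (bilinNr t_bilin).
rewrite -!(poisson_mulA hP1) -!(poisson_mulA hP2).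
rewrite (poisson_mulCA hP1 b a) (poisson_mulCA hP2 b' a').
(* The right side now has twelve terms: the eight of the left side and two
   pairs cancelling by anticommutativity. *)
rewrite !addrA [RHS](ACl ((1*7*4*11*2*9*6*12)*((3*10)*(5*8)))) /=.
by rewrite !addrN !addr0.
Qed.

Lemma tensor_jacobi x y z : br x (br y z) = br (br x y) z + br y (br x z).
Proof.
elim/tensor_ind: x y z => [u v IHu IHv|a a'] y z.
  by rewrite !(bilinDl hbr, bilinDr hbr) IHu IHv addrACA.
elim/tensor_ind: y z => [u v IHu IHv|b b'] z.
  by rewrite !(bilinDl hbr, bilinDr hbr) IHu IHv addrACA.
elim/tensor_ind: z => [u v IHu IHv|c c'].
  by rewrite !(bilinDl hbr, bilinDr hbr) IHu IHv addrACA.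
exact: tensor_jacobi_pure.
Qed.

Lemma tensor_poisson : poisson mul br.
Proof.
split; first by split; [exact: hmul | split; [exact: tensor_mulC | exact: tensor_mulA]].
split; last exact: tensor_leibniz.
exact: lie_bracketI hbr tensor_brxx tensor_jacobi.
Qed.

End TensorProduct.

Section ArgumentTuples.
Variables (T : Type) (N : nat).
Implicit Types (x : 'I_N -> T) (i j k : 'I_N).

Lemma upd_eq x k w : upd x k w k = w.
Proof. by rewrite /upd eqxx. Qed.

Lemma upd_neq x k w i : i != k -> upd x k w i = x i.
Proof. by rewrite /upd => /negPf ->. Qed.

Lemma map_upd_notin x k w r : k \notin r -> map (upd x k w) r = map x r.
Proof.
move=> kr; apply/eq_in_map => i ir; apply: upd_neq.
by apply: contraNneq kr => <-.
Qed.

Lemma swapfC x i j : swapf x i j =1 swapf x j i.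
Proof.
move=> l; rewrite /swapf; case: (eqVneq l i) => [->|li]; last by case: eqP.
by case: eqP => // ->.
Qed.

End ArgumentTuples.

Lemma swapf_lastset (T : Type) (N : nat) (x : 'I_N.+2 -> T) w :
  swapf (lastset x w) ord0 ord_max =1 firstset (swapf x ord0 ord_max) w.
Proof.
move=> l; rewrite /swapf /firstset /lastset /=.
have -> : (val l == 0%N) = (l == ord0) by [].
have -> : (val l == N.+1) = (l == ord_max) by [].
by case: (l == ord0); case: (l == ord_max); rewrite /= ?eqxx.
Qed.

Section NestedBracket.
Variables (A : lmodType K) (br : A -> A -> A).
Hypothesis hbr : bilin br.

Lemma nest_cons x s : s != [::] -> nest br (x :: s) = br x (nest br s).
Proof. by case: s. Qed.

Lemma eq_nbr N (x x' : 'I_N -> A) : x =1 x' -> nbr br x = nbr br x'.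
Proof. by move=> e; rewrite /nbr (eq_map e). Qed.

Lemma nest_upd N (x : 'I_N -> A) k a u v r : uniq r -> k \in r ->
  nest br (map (upd x k (a *: u + v)) r) =
  a *: nest br (map (upd x k u) r) + nest br (map (upd x k v) r).
Proof.
elim: r => [|i r IHr] // /andP[ir r_uniq]; rewrite in_cons !map_cons => /predU1P[->|kr].
  rewrite !upd_eq !map_upd_notin //.
  have [->|r0] := eqVneq (map x r) [::]; first by [].
  by rewrite !nest_cons // (bilinDl hbr) (bilinZl hbr).
have ik : i != k by apply: contraNneq ir => ->.
have r0 w : map (upd x k w) r != [::] by case: r kr {IHr ir r_uniq}.
by rewrite !(upd_neq x _ ik) !nest_cons // IHr // (bilinDr hbr) (bilinZr hbr).
Qed.

Lemma nbr_upd N (x : 'I_N -> A) k a u v :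
  nbr br (upd x k (a *: u + v)) = a *: nbr br (upd x k u) + nbr br (upd x k v).
Proof. by apply: nest_upd; rewrite ?enum_uniq ?mem_enum. Qed.

Lemma nbr_firstset N (x : 'I_N.+2 -> A) w :
  nbr br (firstset x w) = br w (nbr br (x \o lift ord0)).
Proof.
rewrite /nbr enum_ordSl map_cons nest_cons; last by rewrite enum_ordSl.
by rewrite -map_comp.
Qed.

Hypothesis jacobi : forall x y z, br x (br y z) = br (br x y) z + br y (br x z).

Lemma br_nest N v (y : 'I_N -> A) r : uniq r ->
  br v (nest br (map y r)) = \sum_(i <- r) nest br (map (upd y i (br v (y i))) r).
Proof.
elim: r => [|k r IHr]; first by rewrite big_nil (bilin0r hbr).
move=> /andP[kr r_uniq]; rewrite big_cons !map_cons upd_eq map_upd_notin //.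
have [->|r0] := eqVneq r [::]; first by rewrite big_nil addr0.
have yr0 (f : 'I_N -> A) : map f r != [::] by rewrite -size_eq0 size_map size_eq0.
rewrite !nest_cons // jacobi IHr // (bilin_sumr hbr); congr (_ + _).
apply: eq_big_seq => i ir; have ki : k != i by apply: contraNneq kr => ->.
by rewrite map_cons (upd_neq y _ ki) nest_cons.
Qed.

Lemma br_nbr N v (y : 'I_N -> A) :
  br v (nbr br y) = \sum_i nbr br (upd y i (br v (y i))).
Proof. by rewrite /nbr br_nest ?enum_uniq // big_enum. Qed.

End NestedBracket.

Section GeneratedIdeal.
Variables (A : lmodType K) (mul br : A -> A -> A) (S : A -> Prop).

Lemma gen_poisson_ideal_ideal : poisson_ideal mul br (gen_poisson_ideal mul br S).
Proof.
split; first by move=> J [].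
split; first by move=> x y Jx Jy J hJ SJ; apply: hJ.2.1; [exact: Jx | exact: Jy].
split; first by move=> a x Jx J hJ SJ; apply: hJ.2.2.1; exact: Jx.
move=> x y Jx; split; [|split; [|split]] => J hJ SJ;
  by have [_ [_ [_ /(_ x y (Jx J hJ SJ))]]] := hJ; tauto.
Qed.

Lemma mem_gen_poisson_ideal x : S x -> gen_poisson_ideal mul br S x.
Proof. by move=> Sx J _; apply. Qed.

End GeneratedIdeal.

Section IdealQuotient.
Variables (A : lmodType K) (mul br : A -> A -> A) (J : A -> Prop).
Hypotheses (hbr : bilin br) (hJ : poisson_ideal mul br J).
Variables (Q : lmodType K) (pi : A -> Q).
Hypotheses (pi_lin : lin pi) (pi_ker : forall p, pi p = 0 <-> J p).

Lemma pi_eqE a b : pi a = pi b <-> J (a - b).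
Proof.
split=> [e|Jab]; first by apply/pi_ker; rewrite (linB pi_lin) e subrr.
by apply/eqP; rewrite -subr_eq0 -(linB pi_lin); apply/eqP/pi_ker.
Qed.

Lemma pi_br_congr a a' b b' : pi a = pi a' -> pi b = pi b' -> pi (br a b) = pi (br a' b').
Proof.
move=> /pi_eqE Ja /pi_eqE Jb; apply/pi_eqE.
have -> : br a b - br a' b' = br (a - a') b + br a' (b - b').
  by rewrite (bilinBl hbr) (bilinBr hbr) addrA subrK.
have [_ [JD [_ Jbr]]] := hJ.
by apply: JD; [have [_ [_ []]] := Jbr _ b Ja | have [_ [_ []]] := Jbr _ a' Jb].
Qed.

Lemma pi_nest_congr s s' : map pi s = map pi s' -> pi (nest br s) = pi (nest br s').
Proof.
elim: s s' => [|x s IHs] [|x' s'] //; rewrite !map_cons => -[pix pis].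
case: s s' IHs pis => [|y s] [|y' s'] IHs pis //.
by rewrite (nest_cons _ x) // (nest_cons _ x') //; apply: pi_br_congr => //; apply: IHs.
Qed.

Lemma pi_nbr_congr N (x x' : 'I_N -> A) :
  (forall i, pi (x i) = pi (x' i)) -> pi (nbr br x) = pi (nbr br x').
Proof. by move=> e; apply: pi_nest_congr; rewrite -!map_comp; apply: eq_map. Qed.

End IdealQuotient.

Lemma comm_assoc_alg_image (A Q : lmodType K) (mul : A -> A -> A) (mulQ : Q -> Q -> Q)
    (pi : A -> Q) : comm_assoc_alg mul -> lin pi -> (forall q, exists p, pi p = q) ->
  (forall x y, pi (mul x y) = mulQ (pi x) (pi y)) -> comm_assoc_alg mulQ.
Proof.
move=> [hmul [mulC mulA]] pi_lin pi_surj pi_mul.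
split; [split|split] => [a u u' v|a u v v'|u v|u v w].
- have [x <-] := pi_surj u; have [x' <-] := pi_surj u'; have [y <-] := pi_surj v.
  rewrite -(linZ pi_lin) -(linD pi_lin) -!pi_mul (bilinDl hmul) (bilinZl hmul).
  by rewrite (linD pi_lin) (linZ pi_lin).
- have [x <-] := pi_surj u; have [y <-] := pi_surj v; have [y' <-] := pi_surj v'.
  rewrite -(linZ pi_lin) -(linD pi_lin) -!pi_mul (bilinDr hmul) (bilinZr hmul).
  by rewrite (linD pi_lin) (linZ pi_lin).
- by have [x <-] := pi_surj u; have [y <-] := pi_surj v; rewrite -!pi_mul mulC.
- have [x <-] := pi_surj u; have [y <-] := pi_surj v; have [z <-] := pi_surj w.
  by rewrite -!pi_mul mulA.
Qed.

Section PoissonNLieQuotient.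
Variables (A : lmodType K) (mul br : A -> A -> A).
Hypothesis hA : poisson mul br.
Variables (n : nat) (Q : lmodType K) (mulQ : Q -> Q -> Q) (pi : A -> Q).
Hypotheses (pi_lin : lin pi) (pi_surj : forall q, exists p, pi p = q).
Hypothesis pi_ker : forall p, pi p = 0 <-> gen_poisson_ideal mul br (skew_gens br n.+2) p.
Hypothesis pi_mul : forall x y, pi (mul x y) = mulQ (pi x) (pi y).

Let hbr := poisson_br_bilin hA.

Lemma pi_nbr_swapf (x : 'I_n.+2 -> A) i j :
  i != j -> pi (nbr br (swapf x i j)) = - pi (nbr br x).
Proof.
wlog lt_ij : i j / (i < j)%N => [hwlog ij|_].
  case: (ltngtP i j) => [lt_ij|lt_ji|/val_inj eq_ij]; first exact: hwlog.
    by rewrite (eq_nbr _ (swapfC x i j)); apply: hwlog; rewrite // eq_sym.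
  by rewrite eq_ij eqxx in ij.
have /pi_ker : gen_poisson_ideal mul br (skew_gens br n.+2) (nbr br x + nbr br (swapf x i j)).
  by apply: mem_gen_poisson_ideal; exists x, i, j.
by rewrite (linD pi_lin) addrC => /eqP; rewrite addr_eq0 => /eqP.
Qed.

Lemma pi_nbr_lastset (x : 'I_n.+2 -> A) w :
  pi (nbr br (lastset x w)) = pi (br (nbr br (swapf x ord0 ord_max \o lift ord0)) w).
Proof.
have ne_0max : ord0 != ord_max :> 'I_n.+2 by [].
rewrite -[LHS]opprK -(pi_nbr_swapf _ ne_0max) (eq_nbr _ (swapf_lastset x w)).
by rewrite nbr_firstset -(linN pi_lin) -(poisson_br_anti hA).
Qed.

Let pre_spec q : exists p, pi p == q.
Proof. by have [p <-] := pi_surj q; exists p. Qed.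
Let pre q := xchoose (pre_spec q).
Let preK q : pi (pre q) = q. Proof. exact/eqP/(xchooseP (pre_spec q)). Qed.

Definition quotient_nbr (y : 'I_n.+2 -> Q) : Q := pi (nbr br (pre \o y)).

Lemma quotient_nbrE (x : 'I_n.+2 -> A) (y : 'I_n.+2 -> Q) :
  (forall i, pi (x i) = y i) -> quotient_nbr y = pi (nbr br x).
Proof.
move=> e; apply: (pi_nbr_congr hbr (gen_poisson_ideal_ideal _ _ _) pi_lin pi_ker) => i.
by rewrite /= e preK.
Qed.

Lemma quotient_nbr_upd (y : 'I_n.+2 -> Q) k w :
  quotient_nbr (upd y k (pi w)) = pi (nbr br (upd (pre \o y) k w)).
Proof. by apply: quotient_nbrE => i; rewrite /upd; case: (i == k); rewrite ?preK. Qed.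

Lemma quotient_nbr_firstset (y : 'I_n.+2 -> Q) w :
  quotient_nbr (firstset y (pi w)) = pi (nbr br (firstset (pre \o y) w)).
Proof. by apply: quotient_nbrE => i; rewrite /firstset; case: ifP; rewrite ?preK. Qed.

Lemma quotient_nbr_lastset (y : 'I_n.+2 -> Q) w :
  quotient_nbr (lastset y (pi w)) = pi (nbr br (lastset (pre \o y) w)).
Proof. by apply: quotient_nbrE => i; rewrite /lastset; case: ifP; rewrite ?preK. Qed.

Lemma quotient_nbr_multilinear (y : 'I_n.+2 -> Q) k a u v :
  quotient_nbr (upd y k (a *: u + v)) =
  a *: quotient_nbr (upd y k u) + quotient_nbr (upd y k v).
Proof.
have [U <-] := pi_surj u; have [V <-] := pi_surj v.
rewrite -(linZ pi_lin) -(linD pi_lin) !quotient_nbr_upd (nbr_upd hbr).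
by rewrite (linD pi_lin) (linZ pi_lin).
Qed.

Lemma quotient_nbr_skew (y : 'I_n.+2 -> Q) i j :
  i != j -> quotient_nbr (swapf y i j) = - quotient_nbr y.
Proof.
move=> ij; rewrite -(pi_nbr_swapf _ ij); apply: quotient_nbrE => l.
by rewrite /swapf; case: (l == i); case: (l == j); rewrite /= preK.
Qed.

Lemma quotient_nbr_fundamental (y z : 'I_n.+2 -> Q) :
  quotient_nbr (lastset y (quotient_nbr z)) =
  \sum_i quotient_nbr (upd z i (quotient_nbr (lastset y (z i)))).
Proof.
pose v := nbr br (swapf (pre \o y) ord0 ord_max \o lift ord0).
have lastsetE w : quotient_nbr (lastset y (pi w)) = pi (br v w).
  by rewrite quotient_nbr_lastset pi_nbr_lastset.
rewrite lastsetE (br_nbr hbr (poisson_jacobi hA)) (lin_sum pi_lin).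
by apply: eq_bigr => i _; rewrite -[z i]preK lastsetE quotient_nbr_upd.
Qed.

Lemma quotient_nbr_leibniz (y : 'I_n.+2 -> Q) u v :
  quotient_nbr (firstset y (mulQ u v)) =
  mulQ u (quotient_nbr (firstset y v)) + mulQ v (quotient_nbr (firstset y u)).
Proof.
have [U <-] := pi_surj u; have [V <-] := pi_surj v.
rewrite -pi_mul !quotient_nbr_firstset -!pi_mul -(linD pi_lin) !nbr_firstset.
by rewrite (poisson_leibnizl hA).
Qed.

Lemma poisson_nlie_quotient : exists B : ('I_n.+2 -> Q) -> Q,
  (forall x : 'I_n.+2 -> A, B (fun i => pi (x i)) = pi (nbr br x)) /\ poisson_nlie mulQ B.
Proof.
exists quotient_nbr; split; first by move=> x; apply: quotient_nbrE.
split; first exact: comm_assoc_alg_image hA.1 pi_lin pi_surj pi_mul.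
split; first exact: quotient_nbr_multilinear.
split; first exact: quotient_nbr_skew.
split; [exact: quotient_nbr_fundamental | exact: quotient_nbr_leibniz].
Qed.

End PoissonNLieQuotient.

End PoissonAlgebras.

Unset Implicit Arguments.

Theorem proposition4p3 (K : fieldType) (n : nat) (hn : (2 <= n)%N)
  (P1 : lmodType K) (mul1 br1 : P1 -> P1 -> P1) (hP1 : poisson mul1 br1)
  (P2 : lmodType K) (mul2 br2 : P2 -> P2 -> P2) (hP2 : poisson mul2 br2)
  (P : lmodType K) (t : P1 -> P2 -> P) (ht : is_tensor_product t)
  (mul br : P -> P -> P) (hmul : bilin mul) (hbr : bilin br)
  (hmulE : forall x1 y1 x2 y2, mul (t x1 y1) (t x2 y2) = t (mul1 x1 x2) (mul2 y1 y2))
  (hbrE : forall x1 y1 x2 y2,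
      br (t x1 y1) (t x2 y2) = t (br1 x1 x2) (mul2 y1 y2) + t (mul1 x1 x2) (br2 y1 y2))
  (Q : lmodType K) (mulQ : Q -> Q -> Q) (pi : P -> Q)
  (hpi_lin : lin pi) (hpi_surj : forall q : Q, exists p : P, pi p = q)
  (hpi_ker : forall p : P, pi p = 0 <-> gen_poisson_ideal mul br (skew_gens br n) p)
  (hpi_mul : forall x y : P, pi (mul x y) = mulQ (pi x) (pi y)) :
  exists BQ : ('I_n -> Q) -> Q,
    (forall x : 'I_n -> P, BQ (fun i => pi (x i)) = pi (nbr br x)) /\
    poisson_nlie mulQ BQ.
Proof.
have hPoisson := tensor_poisson hP1 hP2 ht hmul hbr hmulE hbrE.
case: n hn hpi_ker => [|[|n]] // _ hpi_ker.
exact: (poisson_nlie_quotient hPoisson hpi_lin hpi_surj hpi_ker hpi_mul).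
Qed.
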